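(* Let $G$ be a directed clique on $[n]$ and $W$ any (nondegenerate) CTLN $W(G,\varepsilon,\delta)$ with legal parameters. Then $\operatorname{FP}(W)=\{\sigma\}$, where $\sigma$ is the unique target-free clique of $G$. In particular, a directed clique is a stable motif if and only if it is a clique.
   Context: $G$ is a simple directed graph. $G$ is a directed clique if its nodes can be ordered $1,\dots,n$ so that $i\to j$ whenever $i<j$ (no constraint on back edges). A clique is a set of nodes pairwise bidirectionally connected; a target of $\sigma$ is $k\notin\sigma$ with $i\to k$ for all $i\in\sigma$; target-free means no target. Legal parameters: $\delta>0$, $0<\varepsilon<\frac{\delta}{\delta+1}$. $W(G,\varepsilon,\delta)$ has $W_{ii}=0$, $W_{ij}=-1+\varepsilon$ if $j\to i$, $W_{ij}=-1-\delta$ if $i\ne j$, $j\not\to i$; dynamics $\dot x_i=-x_i+[\sum_jW_{ij}x_j+\theta]_+$, $\theta>0$; nondegenerate means $\det(I-W_\sigma)\ne0$ and all Cramer determinants for $(I-W_\sigma)x=\theta 1_\sigma$ nonzero. $\operatorname{FP}(W)$ is the set of supports $\{i:x^*_i>0\}$ of fixed points $x^*\in\mathbb R^n_{\ge0}$. $G$ is a stable motif if $[n]\in\operatorname{FP}(W)$ and all eigenvalues of $I-W$ have positive real part. *)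

From HB Require Import structures.
From mathcomp Require Import all_boot all_order all_algebra all_fingroup.
From mathcomp Require Import complex.
Set Implicit Arguments. Unset Strict Implicit. Unset Printing Implicit Defensive.
Import Order.TTheory GRing.Theory Num.Theory.
Local Open Scope ring_scope.

(* A simple directed graph on nodes 'I_n: G u v means the edge u -> v.
   Simple = no self loops. *)
Definition simple_digraph (n : nat) (G : rel 'I_n) : Prop :=
  forall i, ~~ G i i.

Definition directed_clique (n : nat) (G : rel 'I_n) : Prop :=
  exists s : {perm 'I_n}, forall u v : 'I_n, (s u < s v)%N -> G u v.

Definition is_clique (n : nat) (G : rel 'I_n) (sigma : {set 'I_n}) : Prop :=
  forall i j, i \in sigma -> j \in sigma -> i != j -> G i j && G j i.

Definition is_target (n : nat) (G : rel 'I_n) (sigma : {set 'I_n}) (k : 'I_n) : Prop :=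
  k \notin sigma /\ forall i, i \in sigma -> G i k.

Definition target_free (n : nat) (G : rel 'I_n) (sigma : {set 'I_n}) : Prop :=
  forall k, ~ is_target G sigma k.

Definition legal_params (R : realFieldType) (eps delta : R) : Prop :=
  0 < delta /\ 0 < eps /\ eps < delta / (delta + 1).

Definition ctln (R : pzRingType) (n : nat) (G : rel 'I_n) (eps delta : R) : 'M[R]_n :=
  \matrix_(i, j) (if i == j then 0
                  else if G j i then -1 + eps else -1 - delta).

Definition submx_on (R : Type) (n : nat) (A : 'M[R]_n) (sigma : {set 'I_n}) :
    'M[R]_#|sigma| :=
  \matrix_(i, j) A (enum_val i) (enum_val j).

Definition cramer_mx (R : Type) (m : nat) (M : 'M[R]_m) (theta : R) (k : 'I_m) : 'M[R]_m :=
  \matrix_(i, j) (if j == k then theta else M i j).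

Definition ctln_nondegenerate (R : comPzRingType) (n : nat) (W : 'M[R]_n) (theta : R) : Prop :=
  forall sigma : {set 'I_n},
    \det (1%:M - submx_on W sigma) != 0 /\
    forall k, \det (cramer_mx (1%:M - submx_on W sigma) theta k) != 0.

Definition relu (R : realDomainType) (y : R) : R := Num.max y 0.

(* x is a fixed point of dx_i/dt = -x_i + [sum_j W_ij x_j + theta]_+ in R^n_{>=0}. *)
Definition is_fixed_point (R : realDomainType) (n : nat) (W : 'M[R]_n) (theta : R)
    (x : 'cV[R]_n) : Prop :=
  (forall i, 0 <= x i 0) /\
  forall i, x i 0 = relu ((W *m x) i 0 + theta).

Definition supp (R : realDomainType) (n : nat) (x : 'cV[R]_n) : {set 'I_n} :=
  [set i | 0 < x i 0].

Definition in_FP (R : realDomainType) (n : nat) (W : 'M[R]_n) (theta : R)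
    (sigma : {set 'I_n}) : Prop :=
  exists x : 'cV[R]_n, is_fixed_point W theta x /\ supp x = sigma.

Definition stable_motif (R : rcfType) (n : nat) (W : 'M[R]_n) (theta : R) : Prop :=
  in_FP W theta [set: 'I_n] /\
  forall z : R[i], eigenvalue (map_mx (real_complex R) (1%:M - W)) z -> 0 < Re z.

From HB Require Import structures.
From mathcomp Require Import all_boot all_order all_algebra all_fingroup.
From mathcomp Require Import complex.
From mathcomp Require Import zify ring lra.
Set Implicit Arguments. Unset Strict Implicit. Unset Printing Implicit Defensive.
Import Order.TTheory GRing.Theory Num.Theory.
Local Open Scope ring_scope.

(* Fix an ordering s in which every forward edge is present.  Comparing the
   inputs of two nodes term by term, a node k that receives every edge that an
   active node j receives gets strictly more input than j.  Hence the support
   of a fixed point has no target, and has no active pair u -> i with i -/-> u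
   and i dominating u; for a directed clique the latter forces the support to
   be a clique.  Conversely a target-free clique sigma supports a uniform fixed
   point c 1_sigma.  Two target-free cliques coincide: at the latest node where
   they differ, the non-edge provided by target-freeness would have to point
   backwards.  One exists by a greedy pass from the last node down.  For the
   complete graph, I - W = (1 - eps) J + eps I has eigenvalues eps and
   n (1 - eps) + eps. *)

Lemma target_free_witness n (G : rel 'I_n) (T : {set 'I_n}) k :
  target_free G T -> k \notin T -> exists2 i, i \in T & ~~ G i k.
Proof.
move=> tfT kT; have [/exists_inP // | /exists_inPn allG] := boolP [exists i in T, ~~ G i k].
by case: (tfT k); split=> // i /allG /negPn.
Qed.

Section DirectedClique.

Variables (n : nat) (G : rel 'I_n) (s : {perm 'I_n}).
Hypothesis forward_edge : forall u v, (s u < s v)%N -> G u v.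

Lemma eq_perm_pos u v : (s u == s v :> nat) = (u == v).
Proof. by rewrite (inj_eq val_inj) (inj_eq perm_inj). Qed.

Lemma greedy_top t : (t <= n)%N -> exists S : {set 'I_n}, forall u,
  u \in S <-> (n - t <= s u)%N /\ forall i, i \in S -> (s u < s i)%N -> G i u.
Proof.
elim: t => [|t IH] ht.
  by exists set0 => u; rewrite inE subn0 leqNgt ltn_ord; split=> [|[]].
have [S HS] := IH (ltnW ht).
have S_above i : i \in S -> (n - t <= s i)%N by case/HS.
have k_lt : (n - t.+1 < n)%N by lia.
pose k := (s^-1)%g (Ordinal k_lt).
have sk : nat_of_ord (s k) = (n - t.+1)%N by rewrite permKV.
pose b := [forall i in S, G i k].
exists (if b then k |: S else S) => u.
have inS' i : (i \in (if b then k |: S else S)) = ((i == k) && b) || (i \in S).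
  by case: b; rewrite ?inE ?andbT ?andbF.
rewrite inS'; have [-> | uk] /= := eqVneq u k.
  have kS : (k \in S) = false by apply/negbTE/negP => /S_above; lia.
  rewrite kS orbF sk leqnn; split=> [/forall_inP Gk | [_ Gk]].
    by split=> // i; rewrite inS' => /orP[/andP[/eqP -> _] | /Gk //]; rewrite sk ltnn.
  apply/forall_inP => i iS; apply: Gk; first by rewrite inS' iS orbT.
  by have := S_above i iS; lia.
have suk : nat_of_ord (s u) != (n - t.+1)%N by rewrite -sk eq_perm_pos.
rewrite HS; have [le_u | lt_u] := leqP (n - t) (s u); last by split=> [[]|[]]; lia.
split=> -[_ Gu]; split=> [|i]; try lia.
  by rewrite inS' => /orP[/andP[/eqP -> _] | /Gu //]; lia.
by move=> iS; apply: Gu; rewrite inS' iS orbT.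
Qed.

Lemma exists_clique_target_free : exists S, is_clique G S /\ target_free G S.
Proof.
have [S HS] := greedy_top (leqnn n).
have {}HS u : u \in S <-> forall i, i \in S -> (s u < s i)%N -> G i u.
  by rewrite HS subnn; split=> [[]|].
exists S; split=> [i j iS jS ij | k [/negP kS Gk]]; last first.
  by apply: kS; apply/HS => i iS _; apply: Gk.
wlog lt_ij : i j iS jS ij / (s i < s j)%N => [sym|].
  have := ij; rewrite -eq_perm_pos; case: ltngtP => // lt _; first exact: sym.
  by rewrite andbC; apply: sym; rewrite // eq_sym.
by rewrite forward_edge //=; apply: (iffLR (HS i)).
Qed.

Lemma clique_target_free_agree (S T : {set 'I_n}) u :
  is_clique G S -> target_free G T -> u \in S ->
  (forall i, (s u < s i)%N -> (i \in S) = (i \in T)) -> u \in T.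
Proof.
move=> cS tfT uS agree; apply/contraT => uT.
have [i iT nGiu] := target_free_witness tfT uT.
have iu : i != u by apply: contraTneq iT => ->.
have := iu; rewrite -eq_perm_pos; case: ltngtP => // lt _.
  by rewrite forward_edge in nGiu.
have iS : i \in S by rewrite agree.
by have /andP[Giu _] := cS i u iS uS iu; rewrite Giu in nGiu.
Qed.

Lemma clique_target_free_unique (S T : {set 'I_n}) :
  is_clique G S -> target_free G S -> is_clique G T -> target_free G T -> S = T.
Proof.
move=> cS tfS cT tfT; apply/setP => u0; apply/eqP/contraT => Du0.
have [u Du u_max] :=
  @arg_maxnP _ u0 (fun u => (u \in S) != (u \in T)) (fun u => nat_of_ord (s u)) Du0.
have agree i : (s u < s i)%N -> (i \in S) = (i \in T).
  by move=> lt; apply/eqP; apply: contraTT lt => /u_max; rewrite -leqNgt.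
move: Du; have [uS|uS] := boolP (u \in S); have [uT|uT] := boolP (u \in T) => // _.
  by rewrite (clique_target_free_agree cS tfT uS agree) in uT.
have agree' i : (s u < s i)%N -> (i \in T) = (i \in S) by move/agree.
by rewrite (clique_target_free_agree cT tfS uT agree') in uS.
Qed.

End DirectedClique.

Lemma fixed_point_supp (R : realDomainType) n (W : 'M[R]_n) theta x i :
  is_fixed_point W theta x -> 0 < x i 0 -> x i 0 = (W *m x) i 0 + theta.
Proof. by case=> _ ->; rewrite /relu; case: (leP (_ + theta) 0); rewrite ?ltxx. Qed.

Lemma fixed_point_off_supp (R : realDomainType) n (W : 'M[R]_n) theta x i :
  is_fixed_point W theta x -> x i 0 = 0 -> (W *m x) i 0 + theta <= 0.
Proof.
by case=> _ ->; rewrite /relu; case: (leP (_ + theta) 0) => // + y0; rewrite y0 ltxx.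
Qed.

Lemma mulmx_row_dominated (R : realDomainType) n (W : 'M[R]_n) (x : 'cV[R]_n) j k :
  j != k -> W j j = 0 -> W k k = 0 ->
  (forall l, l != j -> l != k -> W j l * x l 0 <= W k l * x l 0) ->
  (W *m x) j 0 + W k j * x j 0 <= (W *m x) k 0 + W j k * x k 0.
Proof.
move=> jk Wjj Wkk dom; rewrite !mxE (bigD1 j) //= [in X in _ <= X](bigD1 j) //=.
rewrite (bigD1 k) 1?eq_sym //= [in X in _ <= X](bigD1 k) 1?eq_sym //= Wjj Wkk !mul0r.
have : \sum_(l | (l != j) && (l != k)) W j l * x l 0
         <= \sum_(l | (l != j) && (l != k)) W k l * x l 0.
  by apply: ler_sum => l /andP[]; apply: dom.
lra.
Qed.

Lemma mul_uniform_col (R : pzSemiRingType) n (A : 'M[R]_n) (sigma : {set 'I_n}) c u :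
  (A *m \col_i (if i \in sigma then c else 0)) u 0 = \sum_(j in sigma) A u j * c.
Proof.
rewrite mxE [RHS]big_mkcond; apply: eq_bigr => j _.
by rewrite mxE; case: (j \in sigma); rewrite ?mulr0.
Qed.

Lemma eigenvalue_const_add_scalar (F : fieldType) n (a e z : F) :
  eigenvalue (const_mx a + e%:M : 'M_n) z -> z = e \/ z = a *+ n + e.
Proof.
case/eigenvalueP => v; rewrite mulmxDr mul_mx_scalar => /rowP eigv v_neq0.
pose sv := \sum_i v 0 i.
have eigvj j : z * v 0 j = sv * a + e * v 0 j.
  have := eigv j; rewrite !mxE => <-; congr (_ + _).
  by rewrite mulr_suml; apply: eq_bigr => i _; rewrite mxE.
have [sv0 | sv_neq0] := eqVneq sv 0.
  have [j vj] : exists j, v 0 j != 0.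
    apply/existsP; apply: contraR v_neq0 => /existsPn v0.
    by apply/eqP/rowP => j; rewrite !mxE; apply/eqP/negPn.
  by left; apply: (mulIf vj); rewrite eigvj sv0 mul0r add0r mulrC.
right; apply: (mulIf sv_neq0).
rewrite /sv mulr_sumr (eq_bigr _ (fun j _ => eigvj j)) big_split /=.
by rewrite sumr_const card_ord -mulr_sumr -/sv mulrDl mulrnAl mulrC [e * _]mulrC.
Qed.

Lemma notin_supp (R : realDomainType) n (x : 'cV[R]_n) l :
  0 <= x l 0 -> (l \notin supp x) = (x l 0 == 0).
Proof. by rewrite inE lt_def negb_and negbK => ->; rewrite orbF. Qed.

Section CTLN.

Variables (R : realFieldType) (n : nat) (G : rel 'I_n) (eps delta theta : R).
Hypotheses (legal : legal_params eps delta) (theta_gt0 : 0 < theta).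
Local Notation W := (ctln G eps delta).

Lemma legal_eps_lt1 : eps < 1.
Proof.
case: legal => delta_gt0 [_ eps_lt]; apply: (lt_trans eps_lt).
by rewrite ltr_pdivrMr ?mul1r; lra.
Qed.

Lemma ctln_diag i : W i i = 0.
Proof. by rewrite mxE eqxx. Qed.

Lemma ctln_edge i j : i != j -> G j i -> W i j = -1 + eps.
Proof. by move=> ij Gji; rewrite mxE (negbTE ij) Gji. Qed.

Lemma ctln_nonedge i j : i != j -> ~~ G j i -> W i j = -1 - delta.
Proof. by move=> ij Gji; rewrite mxE (negbTE ij) (negbTE Gji). Qed.

Lemma ctln_le i j : i != j -> W i j <= -1 + eps.
Proof.
case: legal => delta_gt0 [eps_gt0 _] ij.
by have [/(ctln_edge ij) -> | /(ctln_nonedge ij) ->] := boolP (G j i); lra.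
Qed.

Lemma ctln_le_dominated j k l :
  l != j -> l != k -> (G l j -> G l k) -> W j l <= W k l.
Proof.
rewrite ![l == _]eq_sym => jl kl dom; have [Glj | nGlj] := boolP (G l j).
  by rewrite (ctln_edge jl Glj) (ctln_edge kl (dom Glj)).
case: legal => delta_gt0 [eps_gt0 _]; rewrite (ctln_nonedge jl nGlj).
by have [/(ctln_edge kl) -> | /(ctln_nonedge kl) ->] := boolP (G l k); lra.
Qed.

Lemma ctln_input_dominated (x : 'cV[R]_n) j k :
  (forall l, 0 <= x l 0) -> j != k ->
  (forall l, 0 < x l 0 -> l != j -> l != k -> G l j -> G l k) ->
  (W *m x) j 0 + W k j * x j 0 <= (W *m x) k 0 + W j k * x k 0.
Proof.
move=> x_ge0 jk dom; apply: mulmx_row_dominated; rewrite ?ctln_diag // => l lj lk.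
have [-> | xl_neq0] := eqVneq (x l 0) 0; first by rewrite !mulr0.
have xl_gt0 : 0 < x l 0 by rewrite lt_def xl_neq0 x_ge0.
by rewrite ler_wpM2r ?x_ge0 // ctln_le_dominated // => /dom; apply.
Qed.

Lemma fixed_point_target_free x : is_fixed_point W theta x -> target_free G (supp x).
Proof.
move=> fp k [kT Tk]; have [x_ge0 _] := fp.
have xk0 : x k 0 = 0 by apply/eqP; rewrite -notin_supp.
have yk := fixed_point_off_supp fp xk0.
have [supp0 | [j jT]] := set_0Vmem (supp x).
  have Wx0 : (W *m x) k 0 = 0.
    rewrite mxE big1 // => l _.
    by have := notin_supp (x_ge0 l); rewrite supp0 in_set0 => /esym/eqP ->; rewrite mulr0.
  by move: yk; rewrite Wx0 add0r leNgt theta_gt0.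
have jk : j != k by apply: contraTneq jT => ->.
have dom l : 0 < x l 0 -> l != j -> l != k -> G l j -> G l k.
  by move=> xl _ _ _; apply: Tk; rewrite inE.
have := ctln_input_dominated x_ge0 jk dom.
rewrite (ctln_edge _ (Tk j jT)) 1?eq_sym // xk0 mulr0 addr0.
move: jT; rewrite inE => xj_gt0; have := fixed_point_supp fp xj_gt0.
have : 0 < eps * x j 0 by case: legal => _ [eps_gt0 _]; rewrite mulr_gt0.
lra.
Qed.

Lemma fixed_point_undominated x u i :
  is_fixed_point W theta x -> 0 < x u 0 -> 0 < x i 0 -> G u i -> ~~ G i u ->
  ~ (forall l, 0 < x l 0 -> l != u -> l != i -> G l u -> G l i).
Proof.
move=> fp xu_gt0 xi_gt0 Gui nGiu dom; have [x_ge0 _] := fp.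
have ui : u != i by move: Gui nGiu; case: eqVneq => // -> ->.
have := ctln_input_dominated x_ge0 ui dom.
rewrite (ctln_edge _ Gui) 1?eq_sym // (ctln_nonedge ui nGiu).
have := fixed_point_supp fp xu_gt0; have := fixed_point_supp fp xi_gt0.
have [delta_gt0 [eps_gt0 _]] := legal.
have : 0 < eps * x u 0 by rewrite mulr_gt0.
have : 0 < delta * x i 0 by rewrite mulr_gt0.
lra.
Qed.

Lemma fixed_point_clique (s : {perm 'I_n}) x :
  (forall u v, (s u < s v)%N -> G u v) ->
  is_fixed_point W theta x -> is_clique G (supp x).
Proof.
move=> forward_edge fp a b; rewrite !inE => xa_gt0 xb_gt0 ab; apply/contraT => nGab.
(* The latest active node i lacking a back edge to an earlier active node u
   dominates u: by maximality of i, every active l -> u also points to i. *)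
pose late i := (0 < x i 0) && [exists u, [&& 0 < x u 0, (s u < s i)%N & ~~ G i u]].
have [i0 i0_late] : exists i, late i.
  have := ab; rewrite -(eq_perm_pos s); case: ltngtP => // lt _.
    exists b; rewrite /late xb_gt0; apply/existsP; exists a.
    by move: nGab; rewrite xa_gt0 lt forward_edge.
  exists a; rewrite /late xa_gt0; apply/existsP; exists b.
  by move: nGab; rewrite xb_gt0 lt andbC forward_edge.
have [i /andP[xi_gt0 /existsP[u /and3P[xu_gt0 lt_ui nGiu]]] i_max] :=
  @arg_maxnP _ i0 late (fun i => nat_of_ord (s i)) i0_late.
case: (fixed_point_undominated fp xu_gt0 xi_gt0 (forward_edge _ _ lt_ui) nGiu).
move=> l xl_gt0 lu li Glu; have := li; rewrite -(eq_perm_pos s).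
case: ltngtP => // lt_il _; first exact: forward_edge.
apply/contraT => nGli; have /= := i_max l; rewrite /late xl_gt0 leqNgt lt_il; apply.
by apply/existsP; exists i; rewrite xi_gt0 lt_il nGli.
Qed.

Lemma ctln_mul_uniform_in (sigma : {set 'I_n}) c u :
  is_clique G sigma -> u \in sigma ->
  (W *m \col_i (if i \in sigma then c else 0)) u 0 = (#|sigma|%:R - 1) * ((-1 + eps) * c).
Proof.
move=> cS uS.
have : \sum_(j in sigma) (-1 + eps) * c = #|sigma|%:R * ((-1 + eps) * c).
  by rewrite sumr_const mulr_natl.
rewrite (bigD1 u) //= mulrBl mul1r => <-.
rewrite mul_uniform_col (bigD1 u) //= ctln_diag mul0r add0r addrAC subrr add0r.
apply: eq_bigr => j /andP[jS ju].
by have /andP[Gju _] := cS j u jS uS ju; rewrite ctln_edge // eq_sym.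
Qed.

Lemma ctln_mul_uniform_out (sigma : {set 'I_n}) c u i :
  0 <= c -> u \notin sigma -> i \in sigma -> ~~ G i u ->
  (W *m \col_i (if i \in sigma then c else 0)) u 0
    <= #|sigma|%:R * ((-1 + eps) * c) - (eps + delta) * c.
Proof.
move=> c_ge0 uS iS nGiu; have ui : u != i by apply: contraNneq uS => ->.
have : \sum_(j in sigma) (-1 + eps) * c = #|sigma|%:R * ((-1 + eps) * c).
  by rewrite sumr_const mulr_natl.
rewrite (bigD1 i) //= => <-.
rewrite mul_uniform_col (bigD1 i) //= (ctln_nonedge ui nGiu).
have : \sum_(j in sigma | j != i) W u j * c <= \sum_(j in sigma | j != i) (-1 + eps) * c.
  apply: ler_sum => j /andP[jS _]; rewrite ler_wpM2r // ctln_le //.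
  by apply: contraNneq uS => ->.
lra.
Qed.

Lemma clique_target_free_fixed_point (sigma : {set 'I_n}) :
  is_clique G sigma -> target_free G sigma -> in_FP W theta sigma.
Proof.
move=> cS tfS; have [delta_gt0 [eps_gt0 _]] := legal; have eps_lt1 := legal_eps_lt1.
(* c = (|sigma| - 1) (-1 + eps) c + theta; off sigma a non-edge costs delta c more. *)
pose m : R := #|sigma|%:R; pose D := eps + (1 - eps) * m.
have D_gt0 : 0 < D by rewrite ltr_wpDr // mulr_ge0 ?ler0n // subr_ge0 ltW.
pose c := theta / D; have c_gt0 : 0 < c by rewrite divr_gt0.
have theta_c : theta = c * D by rewrite divfK // gt_eqF.
exists (\col_i (if i \in sigma then c else 0)); split; last first.
  by apply/setP => i; rewrite !inE mxE; case: ifP; rewrite ?ltxx.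
split=> i; rewrite mxE; first by case: ifP => _ //; apply: ltW.
rewrite /relu; have [iS | iS] := boolP (i \in sigma).
  rewrite ctln_mul_uniform_in // theta_c.
  have -> : (#|sigma|%:R - 1) * ((-1 + eps) * c) + c * D = c by rewrite /D /m; ring.
  by rewrite max_l // ltW.
have [j jS nGji] := target_free_witness tfS iS.
have := ctln_mul_uniform_out (ltW c_gt0) iS jS nGji.
have : m * ((-1 + eps) * c) - (eps + delta) * c + c * D = - (delta * c) by rewrite /D; ring.
have : 0 < delta * c by rewrite mulr_gt0.
move=> dc_gt0 input_eq input_le; rewrite max_r // theta_c; lra.
Qed.

Lemma ctln_complete : is_clique G [set: 'I_n] -> 1%:M - W = const_mx (1 - eps) + eps%:M.
Proof.
move=> cG; apply/matrixP => i j; rewrite !mxE.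
have [_ | ij] := eqVneq i j; first by rewrite subr0 subrK.
have /andP[_ Gji] := cG i j (in_setT i) (in_setT j) ij.
by rewrite Gji sub0r opprD opprK addr0.
Qed.

End CTLN.

Lemma ctln_complete_spectrum (R : rcfType) n (G : rel 'I_n) (eps delta : R) z :
  legal_params eps delta -> is_clique G [set: 'I_n] ->
  eigenvalue (map_mx (real_complex R) (1%:M - ctln G eps delta)) z -> 0 < Re z.
Proof.
move=> legal cG; have [_ [eps_gt0 _]] := legal; have eps_lt1 := legal_eps_lt1 legal.
rewrite ctln_complete // map_mxD map_const_mx map_scalar_mx.
case/eigenvalue_const_add_scalar => ->.
  by rewrite -complexRe ltcE /= eqxx.
rewrite -rmorphMn -rmorphD -complexRe ltcE /= eqxx /=.
by rewrite ltr_wpDl // mulrn_wge0 // subr_ge0 ltW.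
Qed.

Theorem proposition1 (R : rcfType) (n : nat) (G : rel 'I_n)
    (eps delta theta : R) :
  simple_digraph G ->
  directed_clique G ->
  legal_params eps delta ->
  0 < theta ->
  ctln_nondegenerate (ctln G eps delta) theta ->
  (exists sigma : {set 'I_n},
      (is_clique G sigma /\ target_free G sigma) /\
      (forall tau : {set 'I_n}, is_clique G tau /\ target_free G tau -> tau = sigma) /\
      (forall tau : {set 'I_n}, in_FP (ctln G eps delta) theta tau <-> tau = sigma)) /\
  (stable_motif (ctln G eps delta) theta <-> is_clique G [set: 'I_n]).
Proof.
move=> _ [s forward_edge] legal theta_gt0 _.
have [S [cS tfS]] := exists_clique_target_free forward_edge.
have unique T : is_clique G T /\ target_free G T -> T = S.
  by case=> cT tfT; exact: (clique_target_free_unique forward_edge cT tfT cS tfS).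
have FP T : in_FP (ctln G eps delta) theta T <-> T = S.
  split=> [[x [fp <-]] | ->]; last exact: clique_target_free_fixed_point.
  apply: unique; split; first exact: fixed_point_clique forward_edge fp.
  exact: fixed_point_target_free fp.
split; first by exists S.
have tfT : target_free G [set: 'I_n] by move=> k []; rewrite in_setT.
split=> [[/FP -> _] // | cT]; split=> [|z]; last exact: ctln_complete_spectrum legal cT.
by apply/FP/unique.
Qed.
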